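(* Let $\gamma>0$, $\tilde T>0$, and let $\zeta_1,\dots,\zeta_M\in\mathbb{R}$. For $i\in E$ define $$\alpha_i=\frac{\zeta_i^2}{2}+\sum_{j\in E\setminus\{i\}}\Big(\tilde q_{ij}\log\frac{\tilde q_{ij}}{q_{ij}}-\tilde q_{ij}+q_{ij}\Big),$$ let $\boldsymbol\alpha=(\alpha_1,\dots,\alpha_M)'$ and define $\boldsymbol\varphi(t)=(\varphi_1(t),\dots,\varphi_M(t))'$ by $$\boldsymbol\varphi(t)=-\int_t^{\tilde T}\exp\big(\tilde{\mathbf Q}(\tilde T-s)\big)\boldsymbol\alpha\,ds,\qquad t\in[0,\tilde T].$$ Then $\boldsymbol\varphi$ is the unique solution of the linear ODE system $$\varphi_i'(t)-\sum_{j\in E\setminus\{i\}}\tilde q_{ij}\big(\varphi_i(t)-\varphi_j(t)\big)-\alpha_i=0,\quad \varphi_i(\tilde T)=0,\quad i\in E,$$ and the functions $u_i(t,w)=-\exp(-\gamma w+\varphi_i(t))$, $i\in E$, form a classical solution on $[0,\tilde T]\times\mathbb{R}$ of the HJB system $$\partial_t u_i+\sup_{(\tilde\pi^{(0)},(\tilde\pi^{(j)})_{j\ne i})}\Big\{\Big(\zeta_i\tilde\pi^{(0)}-\sum_{j\in E\setminus\{i\}}\tilde q_{ij}\tilde\pi^{(j)}\Big)\partial_w u_i+\frac{(\tilde\pi^{(0)})^2}{2}\partial_{ww}u_i+\sum_{j\in E\setminus\{i\}}q_{ij}\big(u_j(t,w+\tilde\pi^{(j)})-u_i(t,w)\big)\Big\}=0,$$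 $i\in E$, $t\in[0,\tilde T)$, with terminal condition $u_i(\tilde T,w)=-e^{-\gamma w}$. Moreover $\partial_{ww}u_i=\gamma^2u_i<0$, and for each $(t,w,i)$ the supremum is attained (uniquely) at $$\tilde\pi^{(0)*}_i=\frac{\zeta_i}{\gamma},\qquad \tilde\pi^{(j)*}_i(t)=-\frac1\gamma\Big(\log\frac{\tilde q_{ij}}{q_{ij}}+\varphi_i(t)-\varphi_j(t)\Big),\quad j\in E\setminus\{i\},$$ which does not depend on $w$.
   Context: $E=\{1,\dots,M\}$. $\tilde{\mathbf Q}=(\tilde q_{ij})$ and $\mathbf Q=(q_{ij})$ are the generator matrices of a continuous-time irreducible Markov chain $\xi$ on $E$ under the risk-neutral measure $\mathbb Q$ and the physical measure $\mathbb P$ respectively (off-diagonal entries nonnegative, rows summing to zero), with $q_{ij}=0$ iff $\tilde q_{ij}=0$. All sums $\sum_{j\in E\setminus\{i\}}$ involving $\log(\tilde q_{ij}/q_{ij})$ are understood to run only over $j$ with $q_{ij}>0$ (terms with $q_{ij}=\tilde q_{ij}=0$ are omitted, and for such $j$ the corresponding variable $\tilde\pi^{(j)}$ does not appear). $\zeta_i$ is the market price of (Brownian) risk in regime $i$, i.e. $dZ^{\mathbb Q}_t=dZ^{\mathbb P}_t+\zeta(\xi_t)dt$. In the financial interpretation, $u_i(t,w)$ is the value function $\sup \mathbb E[-e^{-\gamma W_{\tilde T}}\mid W_t=w,\xi_t=i]$ of an investor trading futures, with transformed controls $\tilde\pi$ and wealth dynamics $dW_t=(\zeta(\xi_t)\tilde\pi^{(0)}_t+\sum_{j\neq\xi_t}(q(\xi_t,j)-\tilde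 q(\xi_t,j))\tilde\pi^{(j)}_t)dt+\tilde\pi^{(0)}_tdZ^{\mathbb P}_t+$ (jump of size $\tilde\pi^{(j)}_t$ when $\xi$ jumps from $\xi_{t-}$ to $j$, compensated under $\mathbb P$). *)

From Stdlib Require Import Reals Lra Lia Arith Relations ClassicalEpsilon.
Open Scope R_scope.

(* The state space E = {1,...,M} is encoded as {0,...,M-1} (indices i < M).
   Matrices are functions nat -> nat -> R, only entries with indices < M matter. *)

Fixpoint fsum (n : nat) (f : nat -> R) : R :=
  match n with
  | O => 0
  | S n' => fsum n' f + f n'
  end.

Definition sumoff (M i : nat) (f : nat -> R) : R :=
  fsum M (fun j => if Nat.eq_dec j i then 0 else f j).

Definition matmul (M : nat) (A B : nat -> nat -> R) : nat -> nat -> R :=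
  fun i j => fsum M (fun k => A i k * B k j).

Definition matid : nat -> nat -> R :=
  fun i j => if Nat.eq_dec i j then 1 else 0.

Fixpoint matpow (M : nat) (A : nat -> nat -> R) (k : nat) : nat -> nat -> R :=
  match k with
  | O => matid
  | S k' => matmul M (matpow M A k') A
  end.

Definition expmx (M : nat) (A : nat -> nat -> R) (t : R) (i j : nat) : R :=
  epsilon (inhabits 0)
    (fun l => infinite_sum (fun k => t ^ k / INR (fact k) * matpow M A k i j) l).

(* Riemann integral of f from a to b (value independent of the integrability proof) *)
Definition RInt (f : R -> R) (a b : R) : R :=
  epsilon (inhabits 0) (fun v => exists pr : Riemann_integrable f a b, RiemannInt pr = v).

Definition is_generator (M : nat) (Q : nat -> nat -> R) : Prop :=
  (forall i j, (i < M)%nat -> (j < M)%nat -> i <> j -> 0 <= Q i j) /\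
  (forall i, (i < M)%nat -> fsum M (fun j => Q i j) = 0).

Definition edge (M : nat) (Q : nat -> nat -> R) (a b : nat) : Prop :=
  (a < M)%nat /\ (b < M)%nat /\ a <> b /\ 0 < Q a b.

Definition irreducible (M : nat) (Q : nat -> nat -> R) : Prop :=
  forall i j, (i < M)%nat -> (j < M)%nat -> clos_refl_trans nat (edge M Q) i j.

(* alpha_i; the log-term sum only runs over j with q_ij > 0 *)
Definition alpha (M : nat) (Q Qt : nat -> nat -> R) (zeta : nat -> R) (i : nat) : R :=
  zeta i ^ 2 / 2 +
  sumoff M i (fun j => if Rlt_dec 0 (Q i j)
                       then Qt i j * ln (Qt i j / Q i j) - Qt i j + Q i j
                       else 0).

Definition phi (M : nat) (Q Qt : nat -> nat -> R) (zeta : nat -> R) (T : R)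
  (i : nat) (t : R) : R :=
  - RInt (fun s => fsum M (fun j => expmx M Qt (T - s) i j * alpha M Q Qt zeta j)) t T.

Definition u (M : nat) (Q Qt : nat -> nat -> R) (zeta : nat -> R) (T gamma : R)
  (i : nat) (t w : R) : R :=
  - exp (- gamma * w + phi M Q Qt zeta T i t).

(* the expression inside the supremum of the HJB equation, with uw, uww the
   values of the w-derivatives of u_i at (t,w) *)
Definition hjb_H (M : nat) (Q Qt : nat -> nat -> R) (zeta : nat -> R) (T gamma : R)
  (i : nat) (t w uw uww : R) (pi0 : R) (p : nat -> R) : R :=
  (zeta i * pi0 - sumoff M i (fun j => Qt i j * p j)) * uw
  + pi0 ^ 2 / 2 * uww
  + sumoff M i (fun j => Q i j * (u M Q Qt zeta T gamma j t (w + p j)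
                                   - u M Q Qt zeta T gamma i t w)).

Definition pi0_star (zeta : nat -> R) (gamma : R) (i : nat) : R := zeta i / gamma.

Definition pij_star (M : nat) (Q Qt : nat -> nat -> R) (zeta : nat -> R) (T gamma : R)
  (i : nat) (t : R) (j : nat) : R :=
  - / gamma * (ln (Qt i j / Q i j) + phi M Q Qt zeta T i t - phi M Q Qt zeta T j t).

Definition cont_on_strip (T : R) (f : R -> R -> R) : Prop :=
  forall t w, 0 <= t <= T -> forall eps, 0 < eps -> exists delta, 0 < delta /\
    forall t' w', 0 <= t' <= T -> Rabs (t' - t) < delta -> Rabs (w' - w) < delta ->
      Rabs (f t' w' - f t w) < eps.

From Pilot Require Import Defs.
From Stdlib Require Import Reals Relations ClassicalEpsilon Lra Lia.
From Coquelicot Require Import Coquelicot.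
Open Scope R_scope.

(* Since d/dr exp(A r) a = A exp(A r) a, the function phi(t) = - int_t^T exp(A (T - s)) a ds
   has derivative exp(A (T - t)) a, and this equals a - A phi(t): both sides have the same
   derivative in t and agree at t = T. For a generator A, -(A phi)_i is the sum over j <> i
   of A_ij (phi_i - phi_j). Uniqueness follows because for the difference d of two solutions,
   |d|^2 exp(K t) is nondecreasing and vanishes at T.
   For u_i = -exp(-gamma w + phi_i), the Hamiltonian splits into a concave quadratic in pi0,
   maximal at zeta_i / gamma, plus one term per jump target j whose deficit from its maximum
   is a positive multiple of e^x - 1 - x, where x is -gamma times the distance of pi^(j) from
   its optimum. The maxima add up to exp(-gamma w + phi_i) (alpha_i + sum_j q~_ij (phi_i - phi_j)),
   which is -d_t u_i. *)

(** * Finite sums *)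

Lemma fsum_ext n f g : (forall k, (k < n)%nat -> f k = g k) -> fsum n f = fsum n g.
Proof.
  induction n; simpl; intros H; auto.
  rewrite IHn, H by (auto; intros; apply H; lia); auto.
Qed.

Lemma fsum_plus n f g : fsum n (fun k => f k + g k) = fsum n f + fsum n g.
Proof. induction n; simpl; [ring | rewrite IHn; ring]. Qed.

Lemma fsum_minus n f g : fsum n (fun k => f k - g k) = fsum n f - fsum n g.
Proof. induction n; simpl; [ring | rewrite IHn; ring]. Qed.

Lemma fsum_scal_l n c f : fsum n (fun k => c * f k) = c * fsum n f.
Proof. induction n; simpl; [ring | rewrite IHn; ring]. Qed.

Lemma fsum_scal_r n c f : fsum n (fun k => f k * c) = fsum n f * c.
Proof. induction n; simpl; [ring | rewrite IHn; ring]. Qed.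

Lemma fsum_const n c : fsum n (fun _ => c) = INR n * c.
Proof. induction n; simpl fsum; [simpl; ring | rewrite IHn, S_INR; ring]. Qed.

Lemma fsum_eq0 n f : (forall k, (k < n)%nat -> f k = 0) -> fsum n f = 0.
Proof. intros H. rewrite (fsum_ext n f (fun _ => 0)), fsum_const by auto. ring. Qed.

Lemma fsum_swap n m (f : nat -> nat -> R) :
  fsum n (fun a => fsum m (fun b => f a b)) = fsum m (fun b => fsum n (fun a => f a b)).
Proof.
  induction n; simpl.
  - symmetry; apply fsum_eq0; auto.
  - rewrite IHn, <- fsum_plus; auto.
Qed.

Lemma fsum_le n f g : (forall k, (k < n)%nat -> f k <= g k) -> fsum n f <= fsum n g.
Proof.
  induction n; simpl; intros H; [lra |].
  pose proof (H n ltac:(lia)); pose proof (IHn ltac:(intros; apply H; lia)); lra.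
Qed.

Lemma fsum_nonneg n f : (forall k, (k < n)%nat -> 0 <= f k) -> 0 <= fsum n f.
Proof. intros H. rewrite <- (fsum_eq0 n (fun _ => 0)) by auto. apply fsum_le; auto. Qed.

Lemma Rabs_fsum_le n f : Rabs (fsum n f) <= fsum n (fun k => Rabs (f k)).
Proof.
  induction n; simpl; [rewrite Rabs_R0; lra |].
  eapply Rle_trans; [apply Rabs_triang | lra].
Qed.

Lemma fsum_ge_term n f k :
  (forall k, (k < n)%nat -> 0 <= f k) -> (k < n)%nat -> f k <= fsum n f.
Proof.
  induction n; simpl; intros H Hk; [lia |].
  destruct (Nat.eq_dec k n) as [-> | Hkn].
  - pose proof (fsum_nonneg n f ltac:(intros; apply H; lia)); lra.
  - pose proof (IHn ltac:(intros; apply H; lia) ltac:(lia)); pose proof (H n ltac:(lia)); lra.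
Qed.

Lemma fsum_matid_l n i f : (i < n)%nat -> fsum n (fun l => matid i l * f l) = f i.
Proof.
  unfold matid; induction n; simpl; intros Hi; [lia |].
  destruct (Nat.eq_dec i n) as [-> | Hin].
  - rewrite fsum_eq0; [ring |]. intros k Hk. destruct (Nat.eq_dec n k); [lia | ring].
  - rewrite IHn by lia. ring.
Qed.

Lemma fsum_matid_r n j f : (j < n)%nat -> fsum n (fun l => f l * matid l j) = f j.
Proof.
  intros Hj. rewrite <- (fsum_matid_l n j f Hj). apply fsum_ext; intros k _.
  unfold matid. destruct (Nat.eq_dec k j), (Nat.eq_dec j k); subst; try lia; ring.
Qed.

Lemma fsum_sumoff n i f : (i < n)%nat -> fsum n f = f i + sumoff n i f.
Proof.
  unfold sumoff; induction n; simpl; intros Hi; [lia |].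
  destruct (Nat.eq_dec i n) as [-> | Hin].
  - destruct (Nat.eq_dec n n); [| lia].
    rewrite (fsum_ext n (fun j => if Nat.eq_dec j n then 0 else f j) f); [ring |].
    intros k Hk. destruct (Nat.eq_dec k n); [lia | auto].
  - rewrite IHn by lia. destruct (Nat.eq_dec n i); [lia | ring].
Qed.

Lemma sumoff_ext n i f g :
  (forall k, (k < n)%nat -> k <> i -> f k = g k) -> sumoff n i f = sumoff n i g.
Proof. intros H. apply fsum_ext; intros k Hk. destruct (Nat.eq_dec k i); auto. Qed.

Lemma sumoff_plus n i f g : sumoff n i (fun k => f k + g k) = sumoff n i f + sumoff n i g.
Proof.
  unfold sumoff; rewrite <- fsum_plus. apply fsum_ext; intros k _.
  destruct (Nat.eq_dec k i); ring.
Qed.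

Lemma sumoff_minus n i f g : sumoff n i (fun k => f k - g k) = sumoff n i f - sumoff n i g.
Proof.
  unfold sumoff; rewrite <- fsum_minus. apply fsum_ext; intros k _.
  destruct (Nat.eq_dec k i); ring.
Qed.

Lemma sumoff_scal_l n i c f : sumoff n i (fun k => c * f k) = c * sumoff n i f.
Proof.
  unfold sumoff; rewrite <- fsum_scal_l. apply fsum_ext; intros k _.
  destruct (Nat.eq_dec k i); ring.
Qed.

Lemma sumoff_le n i f g :
  (forall k, (k < n)%nat -> k <> i -> f k <= g k) -> sumoff n i f <= sumoff n i g.
Proof. intros H. apply fsum_le; intros k Hk. destruct (Nat.eq_dec k i); [lra | auto]. Qed.

Lemma sumoff_nonneg_eq0 n i f k :
  (forall k, (k < n)%nat -> k <> i -> 0 <= f k) -> sumoff n i f = 0 ->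
  (k < n)%nat -> k <> i -> f k = 0.
Proof.
  intros H Hs Hk Hki.
  assert (Hnn : forall j, (j < n)%nat -> 0 <= (if Nat.eq_dec j i then 0 else f j)).
  { intros j Hj. destruct (Nat.eq_dec j i); [lra | auto]. }
  pose proof (fsum_ge_term n _ k Hnn Hk) as Hle.
  pose proof (H k Hk Hki). unfold sumoff in Hs. cbv beta in Hle.
  destruct (Nat.eq_dec k i); [lia | lra].
Qed.

Lemma generator_row_action M A f i : is_generator M A -> (i < M)%nat ->
  fsum M (fun l => A i l * f l) = - sumoff M i (fun j => A i j * (f i - f j)).
Proof.
  intros [_ Hrow] Hi. pose proof (Hrow i Hi) as H0.
  rewrite (fsum_sumoff M i) in H0 |- * by auto. cbv beta.
  rewrite (sumoff_ext M i (fun j => A i j * (f i - f j)) (fun j => f i * A i j - A i j * f j))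
    by (intros; ring).
  rewrite sumoff_minus, sumoff_scal_l.
  change (sumoff M i (fun j => A i j)) with (sumoff M i (A i)) in H0.
  replace (A i i) with (- sumoff M i (A i)) by lra. ring.
Qed.

Lemma derivable_pt_lim_fsum n (f : nat -> R -> R) df x :
  (forall k, (k < n)%nat -> derivable_pt_lim (f k) x (df k)) ->
  derivable_pt_lim (fun y => fsum n (fun k => f k y)) x (fsum n df).
Proof.
  induction n; simpl; intros H.
  - apply derivable_pt_lim_const.
  - apply (derivable_pt_lim_plus (fun y => fsum n (fun k => f k y)) (f n)).
    + apply IHn; intros; apply H; lia.
    + apply H; lia.
Qed.

Lemma continuity_pt_fsum n (f : nat -> R -> R) x :
  (forall k, (k < n)%nat -> continuity_pt (f k) x) ->
  continuity_pt (fun y => fsum n (fun k => f k y)) x.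
Proof.
  induction n; simpl; intros H.
  - apply continuity_pt_const; intros a b; auto.
  - apply (continuity_pt_plus (fun y => fsum n (fun k => f k y)) (f n)).
    + apply IHn; intros; apply H; lia.
    + apply H; lia.
Qed.

(** * The matrix exponential *)

Definition mxnorm M (A : nat -> nat -> R) : R :=
  fsum M (fun i => fsum M (fun j => Rabs (A i j))).

Definition expmx_coef M (A : nat -> nat -> R) i j (k : nat) : R :=
  matpow M A k i j / INR (Factorial.fact k).

Lemma pow_div_fact_le_exp x k : 0 <= x -> x ^ k / INR (Factorial.fact k) <= exp x.
Proof.
  intros Hx. eapply Rle_trans; [| apply (exp_ge_taylor x k Hx)].
  destruct k; [simpl; lra |].
  rewrite tech5.
  assert (0 <= sum_f_R0 (fun n => x ^ n / INR (Factorial.fact n)) k); [| lra].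
  apply cond_pos_sum; intros n.
  apply Rmult_le_pos; [apply pow_le; auto | left; apply Rinv_0_lt_compat, INR_fact_lt_0].
Qed.

Lemma is_series_0 : is_series (fun _ : nat => 0) 0.
Proof.
  pose proof (is_series_scal (K := R_AbsRing) 0 _ _
    (proj1 (is_pseries_R _ 0 _) (is_exp_Reals 0))) as H.
  unfold scal in H; simpl in H; unfold mult in H; simpl in H. rewrite Rmult_0_l in H.
  eapply is_series_ext; [| exact H]. intros n; simpl; ring.
Qed.

Lemma is_pseries_fsum n (c : nat -> R) (b : nat -> nat -> R) (L : nat -> R) x :
  (forall l, (l < n)%nat -> is_pseries (b l) x (L l)) ->
  is_pseries (fun k => fsum n (fun l => c l * b l k)) x (fsum n (fun l => c l * L l)).
Proof.
  induction n; intros H; apply is_pseries_R; simpl.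
  - eapply is_series_ext; [| exact is_series_0]. intros; simpl; ring.
  - assert (H1 := IHn (fun l Hl => H l ltac:(lia))). apply is_pseries_R in H1.
    assert (H2 := H n ltac:(lia)). apply is_pseries_R in H2.
    pose proof (is_series_plus _ _ _ _ H1 (is_series_scal (K := R_AbsRing) (c n) _ _ H2)) as H3.
    eapply is_series_ext; [| exact H3]. intros k.
    unfold plus, scal; simpl; unfold mult; simpl; ring.
Qed.

Section MatrixExponential.
Variables (M : nat) (A : nat -> nat -> R).

Lemma matmul_assoc X Y Z i j :
  matmul M (matmul M X Y) Z i j = matmul M X (matmul M Y Z) i j.
Proof.
  unfold matmul.
  transitivity (fsum M (fun k => fsum M (fun l => X i l * Y l k * Z k j))).
  { apply fsum_ext; intros. rewrite <- fsum_scal_r. auto. }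
  rewrite fsum_swap. apply fsum_ext; intros.
  rewrite <- fsum_scal_l. apply fsum_ext; intros. ring.
Qed.

Lemma matpow_comm k i j : (i < M)%nat -> (j < M)%nat ->
  matmul M (matpow M A k) A i j = matmul M A (matpow M A k) i j.
Proof.
  revert i j; induction k; intros i j Hi Hj.
  - simpl. unfold matmul. rewrite fsum_matid_l, fsum_matid_r; auto.
  - change (matpow M A (S k)) with (matmul M (matpow M A k) A).
    transitivity (matmul M (matmul M A (matpow M A k)) A i j).
    { unfold matmul at 1 3. apply fsum_ext; intros l Hl. rewrite IHk; auto. }
    apply matmul_assoc.
Qed.

Lemma matpow_S_l k i j : (i < M)%nat -> (j < M)%nat ->
  matpow M A (S k) i j = fsum M (fun l => A i l * matpow M A k l j).
Proof. intros. simpl. rewrite matpow_comm; auto. Qed.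

Lemma mxnorm_nonneg : 0 <= mxnorm M A.
Proof. apply fsum_nonneg; intros. apply fsum_nonneg; intros. apply Rabs_pos. Qed.

Lemma Rabs_entry_le_mxnorm i j : (i < M)%nat -> (j < M)%nat -> Rabs (A i j) <= mxnorm M A.
Proof.
  intros Hi Hj. eapply Rle_trans.
  2:{ apply (fsum_ge_term M (fun i => fsum M (fun j => Rabs (A i j))) i); auto.
      intros; apply fsum_nonneg; intros; apply Rabs_pos. }
  apply (fsum_ge_term M (fun j => Rabs (A i j)) j); auto. intros; apply Rabs_pos.
Qed.

Lemma matpow_entry_bound k i j : (i < M)%nat -> (j < M)%nat ->
  Rabs (matpow M A k i j) <= (INR M * mxnorm M A) ^ k.
Proof.
  revert i j; induction k; intros i j Hi Hj.
  - simpl. unfold matid. destruct (Nat.eq_dec i j); rewrite ?Rabs_R1, ?Rabs_R0; lra.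
  - simpl matpow. unfold matmul. eapply Rle_trans; [apply Rabs_fsum_le |].
    eapply Rle_trans.
    { apply (fsum_le M _ (fun _ => (INR M * mxnorm M A) ^ k * mxnorm M A)).
      intros l Hl. rewrite Rabs_mult.
      apply Rmult_le_compat; try apply Rabs_pos; auto.
      apply Rabs_entry_le_mxnorm; auto. }
    rewrite fsum_const. simpl. lra.
Qed.

Lemma CV_radius_expmx_coef i j x : (i < M)%nat -> (j < M)%nat ->
  Rbar_lt (Rabs x) (CV_radius (expmx_coef M A i j)).
Proof.
  intros Hi Hj. set (C := INR M * mxnorm M A).
  assert (HC : 0 <= C) by (apply Rmult_le_pos; [apply pos_INR | apply mxnorm_nonneg]).
  set (r := Rabs x + 1).
  assert (Hr : 0 <= r) by (unfold r; pose proof (Rabs_pos x); lra).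
  assert (Hbd : Rbar_le r (CV_radius (expmx_coef M A i j))).
  { apply CV_radius_bounded. exists (exp (C * r)). intros n.
    unfold expmx_coef.
    rewrite Rabs_mult, Rabs_div, (Rabs_right (INR (Factorial.fact n))), <- RPow_abs, (Rabs_right r);
      try (apply Rle_ge; auto; apply pos_INR); [| apply not_0_INR, Factorial.fact_neq_0].
    eapply Rle_trans; [| apply (pow_div_fact_le_exp _ n), Rmult_le_pos; auto].
    rewrite Rpow_mult_distr. unfold Rdiv.
    assert (0 < / INR (Factorial.fact n)) by (apply Rinv_0_lt_compat, INR_fact_lt_0).
    pose proof (pow_le r n Hr).
    pose proof (matpow_entry_bound n i j Hi Hj).
    replace (C ^ n * r ^ n * / INR (Factorial.fact n))
      with (C ^ n * / INR (Factorial.fact n) * r ^ n) by ring.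
    apply Rmult_le_compat_r; auto. fold C in H1. apply Rmult_le_compat_r; lra. }
  destruct (CV_radius (expmx_coef M A i j)); simpl in *; auto. unfold r in Hbd; lra.
Qed.

Lemma expmx_PSeries r i j : (i < M)%nat -> (j < M)%nat ->
  expmx M A r i j = PSeries (expmx_coef M A i j) r.
Proof.
  intros Hi Hj.
  assert (Hs : infinite_sum (fun k => r ^ k / INR (Factorial.fact k) * matpow M A k i j)
                 (PSeries (expmx_coef M A i j) r)).
  { apply is_series_Reals.
    pose proof (PSeries_correct _ _ (CV_radius_inside _ _
      (CV_radius_expmx_coef i j r Hi Hj))) as H.
    apply is_pseries_R in H. eapply is_series_ext; [| exact H].
    intros n. unfold expmx_coef. simpl. field. apply not_0_INR, Factorial.fact_neq_0. }
  unfold expmx.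
  eapply uniqueness_sum; [| exact Hs].
  exact (epsilon_spec (inhabits 0) _ (ex_intro _ _ Hs)).
Qed.

Lemma derivable_pt_lim_expmx r i j : (i < M)%nat -> (j < M)%nat ->
  derivable_pt_lim (fun s => expmx M A s i j) r (fsum M (fun l => A i l * expmx M A r l j)).
Proof.
  intros Hi Hj. apply is_derive_Reals.
  apply (is_derive_ext (PSeries (expmx_coef M A i j))).
  { intros s. symmetry. apply expmx_PSeries; auto. }
  replace (fsum M (fun l => A i l * expmx M A r l j))
    with (PSeries (PS_derive (expmx_coef M A i j)) r).
  { apply is_derive_PSeries, CV_radius_expmx_coef; auto. }
  apply is_pseries_unique.
  eapply is_pseries_ext;
    [| apply (is_pseries_fsum M (A i) (fun l => expmx_coef M A l j))].
  - intros n. unfold PS_derive, expmx_coef. rewrite matpow_S_l by auto.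
    unfold Rdiv. rewrite <- fsum_scal_r, <- fsum_scal_l. apply fsum_ext; intros l Hl.
    rewrite fact_simpl, mult_INR. field.
    split; [apply not_0_INR, Factorial.fact_neq_0 | apply not_0_INR; lia].
  - intros l Hl. rewrite expmx_PSeries by auto.
    apply PSeries_correct, CV_radius_inside, CV_radius_expmx_coef; auto.
Qed.

Lemma expmx_0 i j : (i < M)%nat -> (j < M)%nat -> expmx M A 0 i j = matid i j.
Proof.
  intros Hi Hj. rewrite expmx_PSeries, PSeries_0 by auto.
  unfold expmx_coef; simpl. unfold Rdiv. rewrite Rinv_1, Rmult_1_r. auto.
Qed.

End MatrixExponential.

(** * The linear terminal value problem *)

Lemma RInt_of_continuous f a b :
  (forall x, continuity_pt f x) -> Defs.RInt f a b = RInt f a b.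
Proof.
  intros Hc.
  assert (Hex : ex_RInt f a b).
  { apply (ex_RInt_continuous (V := R_CompleteNormedModule)).
    intros z _. apply continuity_pt_filterlim, Hc. }
  unfold Defs.RInt.
  destruct (epsilon_spec (inhabits 0)
     (fun v => exists pr : Riemann_integrable f a b, RiemannInt pr = v)
     (ex_intro _ _ (ex_intro _ (ex_RInt_Reals_0 _ _ _ Hex) eq_refl))) as [pr <-].
  symmetry. apply RInt_Reals.
Qed.

Definition expmx_vec M A (a : nat -> R) i r : R := fsum M (fun j => expmx M A r i j * a j).

(* [phi] is literally [tvp_sol M Qt (alpha M Q Qt zeta) T]. *)
Definition tvp_sol M A a T i t : R := - Defs.RInt (fun s => expmx_vec M A a i (T - s)) t T.

Definition tvp_rhs M A a T i t : R := a i - fsum M (fun l => A i l * tvp_sol M A a T l t).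

Section TerminalValueProblem.
Variables (M : nat) (A : nat -> nat -> R) (a : nat -> R) (T : R).

Lemma derivable_pt_lim_expmx_vec i r : (i < M)%nat ->
  derivable_pt_lim (expmx_vec M A a i) r (fsum M (fun l => A i l * expmx_vec M A a l r)).
Proof.
  intros Hi. unfold expmx_vec.
  replace (fsum M (fun l => A i l * fsum M (fun j => expmx M A r l j * a j)))
    with (fsum M (fun j => fsum M (fun l => A i l * expmx M A r l j) * a j)).
  - apply (derivable_pt_lim_fsum M (fun j s => expmx M A s i j * a j)). intros j Hj.
    apply derivable_pt_lim_scal_right, derivable_pt_lim_expmx; auto.
  - transitivity (fsum M (fun j => fsum M (fun l => A i l * expmx M A r l j * a j))).
    { apply fsum_ext; intros j _. rewrite <- fsum_scal_r. auto. }
    rewrite fsum_swap. apply fsum_ext; intros l _.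
    rewrite <- fsum_scal_l. apply fsum_ext; intros j _. ring.
Qed.

Lemma expmx_vec_0 i : (i < M)%nat -> expmx_vec M A a i 0 = a i.
Proof.
  intros Hi. unfold expmx_vec.
  rewrite (fsum_ext M _ (fun j => matid i j * a j)) by (intros; rewrite expmx_0; auto).
  apply fsum_matid_l; auto.
Qed.

Lemma continuity_pt_expmx_vec_rev i s : (i < M)%nat ->
  continuity_pt (fun s => expmx_vec M A a i (T - s)) s.
Proof.
  intros Hi. apply (continuity_pt_comp (fun s => T - s) (expmx_vec M A a i)).
  - apply continuity_pt_minus;
      [apply continuity_pt_const; intros ? ?; auto | apply continuity_pt_id].
  - eapply derivable_continuous_pt. eexists. apply derivable_pt_lim_expmx_vec; auto.
Qed.

Lemma tvp_sol_RInt i t : (i < M)%nat ->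
  tvp_sol M A a T i t = - RInt (fun s => expmx_vec M A a i (T - s)) t T.
Proof.
  intros Hi. unfold tvp_sol. rewrite RInt_of_continuous; auto.
  intros; apply continuity_pt_expmx_vec_rev; auto.
Qed.

Lemma tvp_sol_T i : (i < M)%nat -> tvp_sol M A a T i T = 0.
Proof. intros Hi. rewrite tvp_sol_RInt, RInt_point by auto. unfold zero; simpl; ring. Qed.

Lemma derivable_pt_lim_tvp_sol_expmx_vec i t : (i < M)%nat ->
  derivable_pt_lim (tvp_sol M A a T i) t (expmx_vec M A a i (T - t)).
Proof.
  intros Hi. apply is_derive_Reals.
  apply (is_derive_ext (fun t => - RInt (fun s => expmx_vec M A a i (T - s)) t T)).
  { intros; symmetry; apply tvp_sol_RInt; auto. }
  rewrite <- (Ropp_involutive (expmx_vec M A a i (T - t))).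
  apply (is_derive_opp (fun t => RInt (fun s => expmx_vec M A a i (T - s)) t T)).
  assert (HRInt : is_derive (fun t => RInt (fun s => expmx_vec M A a i (T - s)) t T) t
                (opp (expmx_vec M A a i (T - t)))).
  { apply (is_derive_RInt' (fun s => expmx_vec M A a i (T - s))
      (fun t => RInt (fun s => expmx_vec M A a i (T - s)) t T) t T).
    - exists (mkposreal 1 Rlt_0_1). intros y _.
      apply (RInt_correct (V := R_CompleteNormedModule)),
        (ex_RInt_continuous (V := R_CompleteNormedModule)).
      intros z _. apply continuity_pt_filterlim, continuity_pt_expmx_vec_rev; auto.
    - apply continuity_pt_filterlim, continuity_pt_expmx_vec_rev; auto. }
  exact HRInt.
Qed.

Lemma continuity_pt_tvp_sol i t : (i < M)%nat -> continuity_pt (tvp_sol M A a T i) t.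
Proof.
  intros Hi. eapply derivable_continuous_pt. eexists.
  apply derivable_pt_lim_tvp_sol_expmx_vec; auto.
Qed.

Lemma expmx_vec_eq_tvp_rhs i t : (i < M)%nat -> expmx_vec M A a i (T - t) = tvp_rhs M A a T i t.
Proof.
  intros Hi.
  set (gap := fun t => expmx_vec M A a i (T - t) - tvp_rhs M A a T i t).
  assert (Hgap' : forall x, derivable_pt_lim gap x 0).
  { intros x. unfold gap, tvp_rhs.
    replace 0 with (fsum M (fun l => A i l * expmx_vec M A a l (T - x)) * (0 - 1)
                    - (0 - fsum M (fun l => A i l * expmx_vec M A a l (T - x)))) by ring.
    apply derivable_pt_lim_minus.
    - apply (derivable_pt_lim_comp (fun t => T - t) (expmx_vec M A a i)).
      + apply derivable_pt_lim_minus; [apply derivable_pt_lim_const | apply derivable_pt_lim_id].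
      + apply derivable_pt_lim_expmx_vec; auto.
    - apply derivable_pt_lim_minus; [apply derivable_pt_lim_const |].
      apply (derivable_pt_lim_fsum M (fun l t => A i l * tvp_sol M A a T l t)).
      intros l Hl. apply derivable_pt_lim_scal, derivable_pt_lim_tvp_sol_expmx_vec; auto. }
  assert (HgapT : gap T = 0).
  { unfold gap, tvp_rhs. rewrite Rminus_diag, expmx_vec_0 by auto.
    rewrite fsum_eq0; [ring |]. intros l Hl. rewrite tvp_sol_T; auto. ring. }
  destruct (MVT_gen gap t T (fun _ => 0)) as [c [_ Hc]].
  - intros x _. apply is_derive_Reals, Hgap'.
  - intros x _. eapply derivable_continuous_pt. exists 0. apply Hgap'.
  - assert (Hgapt : gap t = 0) by lra. unfold gap in Hgapt. lra.
Qed.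

Lemma derivable_pt_lim_tvp_sol i t : (i < M)%nat ->
  derivable_pt_lim (tvp_sol M A a T i) t (tvp_rhs M A a T i t).
Proof.
  intros Hi. rewrite <- expmx_vec_eq_tvp_rhs by auto.
  apply derivable_pt_lim_tvp_sol_expmx_vec; auto.
Qed.

Lemma continuity_pt_tvp_rhs i t : (i < M)%nat -> continuity_pt (tvp_rhs M A a T i) t.
Proof.
  intros Hi. unfold tvp_rhs.
  apply (continuity_pt_minus (fun _ => a i)
           (fun t => fsum M (fun l => A i l * tvp_sol M A a T l t))).
  - apply continuity_pt_const; intros ? ?; auto.
  - apply (continuity_pt_fsum M (fun l t => A i l * tvp_sol M A a T l t)). intros l Hl.
    apply (continuity_pt_mult (fun _ => A i l)); [apply continuity_pt_const; intros ? ?; auto |].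
    apply continuity_pt_tvp_sol; auto.
Qed.

Lemma tvp_rhs_generator i t : is_generator M A -> (i < M)%nat ->
  tvp_rhs M A a T i t
  = a i + sumoff M i (fun j => A i j * (tvp_sol M A a T i t - tvp_sol M A a T j t)).
Proof. intros HA Hi. unfold tvp_rhs. rewrite generator_row_action by auto. ring. Qed.


End TerminalValueProblem.

(** * Uniqueness *)

Definition clamp (T x : R) : R := Rmax 0 (Rmin T x).

Lemma clamp_in T x : 0 <= T -> 0 <= clamp T x <= T.
Proof. intros H. unfold clamp, Rmax, Rmin. repeat destruct Rle_dec; lra. Qed.

Lemma clamp_id T x : 0 <= x <= T -> clamp T x = x.
Proof. intros H. unfold clamp, Rmax, Rmin. repeat destruct Rle_dec; lra. Qed.

Lemma clamp_dist T x y : 0 <= x <= T -> Rabs (clamp T y - x) <= Rabs (y - x).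
Proof.
  intros H. unfold clamp, Rmax, Rmin.
  repeat destruct Rle_dec; unfold Rabs; repeat destruct Rcase_abs; lra.
Qed.

Lemma continuity_pt_clamp (f : R -> R) T x : 0 <= x <= T ->
  continue_in f (fun y => 0 <= y <= T) x -> continuity_pt (fun y => f (clamp T y)) x.
Proof.
  intros Hx H.
  unfold continuity_pt, continue_in, limit1_in, limit_in, D_x, no_cond in *.
  simpl in *. unfold R_dist in *.
  intros eps Heps. destruct (H eps Heps) as [alp [Halp Hd]]. exists alp. split; auto.
  intros y [_ Hy]. rewrite (clamp_id T x) by auto.
  destruct (Req_dec (clamp T y) x) as [E | E].
  - rewrite E, Rminus_diag, Rabs_R0. auto.
  - apply Hd. repeat split; auto; try apply clamp_in; try lra.
    eapply Rle_lt_trans; [apply clamp_dist |]; auto.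
Qed.

Lemma derivable_pt_lim_clamp (f : R -> R) T x l : 0 < x < T -> derivable_pt_lim f x l ->
  derivable_pt_lim (fun y => f (clamp T y)) x l.
Proof.
  intros Hx H. apply is_derive_Reals. apply is_derive_Reals in H.
  eapply is_derive_ext_loc; [| exact H].
  assert (He : 0 < Rmin x (T - x)) by (apply Rmin_pos; lra).
  exists (mkposreal _ He). intros y Hy.
  unfold ball in Hy; simpl in Hy.
  unfold AbsRing_ball, abs, minus, plus, opp in Hy; simpl in Hy.
  pose proof (Rmin_l x (T - x)); pose proof (Rmin_r x (T - x)).
  rewrite clamp_id; auto. unfold Rabs in Hy; destruct Rcase_abs in Hy; lra.
Qed.

Lemma Rabs_two_mul_le a b c V :
  a * a <= V -> b * b <= V -> Rabs (2 * a * (c * b)) <= Rabs c * (2 * V).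
Proof.
  intros Ha Hb. replace (2 * a * (c * b)) with (c * (2 * a * b)) by ring.
  rewrite Rabs_mult. apply Rmult_le_compat_l; [apply Rabs_pos |].
  apply Rabs_le. split; nra.
Qed.

Section LinearODEUniqueness.
Variables (M : nat) (B : nat -> nat -> R) (T : R) (d : nat -> R -> R).
Hypothesis d_cont : forall i, (i < M)%nat -> forall t, 0 <= t <= T ->
  continue_in (d i) (fun x => 0 <= x <= T) t.
Hypothesis d_ode : forall i, (i < M)%nat -> forall t, 0 < t < T ->
  derivable_pt_lim (d i) t (fsum M (fun l => B i l * d l t)).
Hypothesis d_T : forall i, (i < M)%nat -> d i T = 0.

Let e i x := d i (clamp T x).
Let V x := fsum M (fun i => e i x * e i x).
Let K := 2 * mxnorm M B.
Let W x := V x * exp (K * x).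
Let dV x := fsum M (fun i => 2 * e i x * fsum M (fun l => B i l * e l x)).

Lemma energy_le i x : (i < M)%nat -> e i x * e i x <= V x.
Proof. intros Hi. apply (fsum_ge_term M (fun i => e i x * e i x)); auto. intros; nra. Qed.

Lemma continuity_pt_energy x : 0 <= x <= T -> continuity_pt W x.
Proof.
  intros Hx. apply (continuity_pt_mult V (fun x => exp (K * x))).
  - apply (continuity_pt_fsum M (fun i x => e i x * e i x)). intros k Hk.
    apply (continuity_pt_mult (e k) (e k)); apply continuity_pt_clamp; auto.
  - apply (continuity_pt_comp (fun x => K * x) exp).
    + apply (continuity_pt_mult (fun _ => K) (fun x => x));
        [apply continuity_pt_const; intros ? ?; auto | apply continuity_pt_id].
    + apply derivable_continuous_pt, derivable_pt_exp.
Qed.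

Lemma derivable_pt_lim_energy x : 0 < x < T ->
  derivable_pt_lim W x ((dV x + K * V x) * exp (K * x)).
Proof.
  intros Hx.
  assert (HV : derivable_pt_lim V x (dV x)).
  { apply (derivable_pt_lim_fsum M (fun i x => e i x * e i x)). intros k Hk.
    assert (He : derivable_pt_lim (e k) x (fsum M (fun l => B k l * e l x))).
    { apply derivable_pt_lim_clamp; auto.
      rewrite (fsum_ext M _ (fun l => B k l * d l x)).
      - apply d_ode; auto.
      - intros l _. unfold e. rewrite clamp_id by lra. auto. }
    replace (2 * e k x * fsum M (fun l => B k l * e l x))
      with (fsum M (fun l => B k l * e l x) * e k x + e k x * fsum M (fun l => B k l * e l x))
      by ring.
    apply (derivable_pt_lim_mult (e k) (e k)); auto. }
  assert (HE : derivable_pt_lim (fun x => exp (K * x)) x (exp (K * x) * K)).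
  { apply (derivable_pt_lim_comp (fun x => K * x) exp); [| apply derivable_pt_lim_exp].
    pose proof (derivable_pt_lim_scal id K x 1 (derivable_pt_lim_id x)) as HK.
    rewrite Rmult_1_r in HK. exact HK. }
  replace ((dV x + K * V x) * exp (K * x))
    with (dV x * exp (K * x) + V x * (exp (K * x) * K)) by ring.
  apply (derivable_pt_lim_mult V (fun x => exp (K * x))); auto.
Qed.

Lemma Rabs_energy_derivative_le x : Rabs (dV x) <= K * V x.
Proof.
  unfold dV. rewrite (fsum_ext M _ (fun i => fsum M (fun l => 2 * e i x * (B i l * e l x))))
    by (intros; symmetry; apply fsum_scal_l).
  eapply Rle_trans; [apply Rabs_fsum_le |].
  eapply Rle_trans.
  { apply (fsum_le M _ (fun i => fsum M (fun l => Rabs (B i l) * (2 * V x)))). intros i Hi.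
    eapply Rle_trans; [apply Rabs_fsum_le |]. apply fsum_le; intros l Hl.
    apply Rabs_two_mul_le; apply energy_le; auto. }
  right. unfold K, mxnorm.
  rewrite (fsum_ext M _ (fun i => fsum M (fun l => Rabs (B i l)) * (2 * V x)))
    by (intros; apply fsum_scal_r).
  rewrite fsum_scal_r. ring.
Qed.

Lemma linear_ode_terminal_zero i t : (i < M)%nat -> 0 <= t <= T -> d i t = 0.
Proof.
  intros Hi Ht.
  assert (HWT : W T = 0).
  { unfold W, V. rewrite fsum_eq0; [ring |]. intros k Hk.
    unfold e. rewrite clamp_id, d_T by (auto; lra). ring. }
  assert (HWt : W t <= 0).
  { destruct (Req_dec t T) as [-> | Hne]; [lra |].
    set (dW := fun x => Rmax 0 ((dV x + K * V x) * exp (K * x))).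
    destruct (MVT_gen W t T dW) as [c [_ Hc]].
    - intros x Hx. rewrite Rmin_left, Rmax_right in Hx by lra.
      unfold dW. rewrite Rmax_right.
      + apply is_derive_Reals, derivable_pt_lim_energy; lra.
      + apply Rmult_le_pos; [| left; apply exp_pos].
        pose proof (Rabs_energy_derivative_le x). pose proof (Rle_abs (- dV x)).
        rewrite Rabs_Ropp in *. lra.
    - intros x Hx. rewrite Rmin_left, Rmax_right in Hx by lra.
      apply continuity_pt_energy; lra.
    - pose proof (Rmax_l 0 ((dV c + K * V c) * exp (K * c))). fold (dW c) in *. nra. }
  assert (HVt : V t = 0).
  { pose proof (fsum_nonneg M (fun i => e i t * e i t) ltac:(intros; nra)).
    pose proof (exp_pos (K * t)). unfold W in HWt. fold (V t) in *. nra. }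
  pose proof (energy_le i t Hi). unfold e in *. rewrite clamp_id in * by lra. nra.
Qed.

End LinearODEUniqueness.

Lemma continue_in_minus_continuity_pt f g D x :
  continue_in f D x -> continuity_pt g x -> continue_in (fun y => f y - g y) D x.
Proof.
  intros Hf Hg. apply limit_minus; auto.
  apply (limit1_imp g (D_x no_cond x)); auto.
  intros y [_ Hy]. split; [exact I | auto].
Qed.

Section Phi.
Variables (M : nat) (Q Qt : nat -> nat -> R) (zeta : nat -> R) (T : R).
Hypothesis HQt : is_generator M Qt.

Lemma phi_T i : (i < M)%nat -> phi M Q Qt zeta T i T = 0.
Proof. apply tvp_sol_T. Qed.

Lemma phi_rhs i t : (i < M)%nat ->
  tvp_rhs M Qt (alpha M Q Qt zeta) T i t = alpha M Q Qt zeta i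
    + sumoff M i (fun j => Qt i j * (phi M Q Qt zeta T i t - phi M Q Qt zeta T j t)).
Proof. apply tvp_rhs_generator; auto. Qed.

Lemma phi_unique (psi dpsi : nat -> R -> R) :
  (forall i, (i < M)%nat ->
     (forall t, 0 <= t <= T -> continue_in (psi i) (fun x => 0 <= x <= T) t) /\
     (forall t, 0 < t < T ->
        derivable_pt_lim (psi i) t (dpsi i t) /\
        dpsi i t - sumoff M i (fun j => Qt i j * (psi i t - psi j t))
          - alpha M Q Qt zeta i = 0) /\
     psi i T = 0) ->
  forall i t, (i < M)%nat -> 0 <= t <= T -> psi i t = phi M Q Qt zeta T i t.
Proof.
  intros Hpsi i t Hi Ht.
  enough (psi i t - phi M Q Qt zeta T i t = 0) by lra.
  apply (linear_ode_terminal_zero M (fun k l => - Qt k l) T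
           (fun k s => psi k s - phi M Q Qt zeta T k s)); auto.
  - intros k Hk s Hs. apply continue_in_minus_continuity_pt.
    + apply Hpsi; auto.
    + apply continuity_pt_tvp_sol; auto.
  - intros k Hk s Hs. destruct (Hpsi k Hk) as [_ [Hder _]].
    destruct (Hder s Hs) as [Hdpsi Hode].
    replace (fsum M (fun l => - Qt k l * (psi l s - phi M Q Qt zeta T l s)))
      with (dpsi k s - tvp_rhs M Qt (alpha M Q Qt zeta) T k s).
    + apply derivable_pt_lim_minus; auto. apply derivable_pt_lim_tvp_sol; auto.
    + rewrite (fsum_ext M _ (fun l => Qt k l * phi M Q Qt zeta T l s - Qt k l * psi l s))
        by (intros; ring).
      rewrite fsum_minus, (generator_row_action M Qt (fun l => psi l s)),
        (generator_row_action M Qt (fun l => phi M Q Qt zeta T l s)), phi_rhs by auto.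
      lra.
  - intros k Hk. destruct (Hpsi k Hk) as [_ [_ HpsiT]]. rewrite HpsiT, phi_T; auto; ring.
Qed.

End Phi.

(** * The HJB equation *)

Section JumpGain.
Variables (g qt q a b w : R).
Hypotheses (Hg : 0 < g) (Hqt : 0 < qt) (Hq : 0 < q).

(* The j-th jump term of the Hamiltonian, with a = phi_i(t) and b = phi_j(t). *)
Definition jump_gain p : R :=
  - (qt * p) * (g * exp (- g * w + a)) + q * (- exp (- g * (w + p) + b) - - exp (- g * w + a)).

Definition jump_argmax : R := - / g * (ln (qt / q) + a - b).

Definition jump_max : R := exp (- g * w + a) * (qt * ln (qt / q) - qt + q + qt * (a - b)).

Lemma jump_max_sub_gain p : jump_max - jump_gain p =
  exp (- g * w + a) * qt * (exp (- g * (p - jump_argmax)) - (1 + - g * (p - jump_argmax))).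
Proof.
  assert (H1 : exp (- g * (w + p) + b)
               = exp (- g * w + a) * (qt / q) * exp (- g * (p - jump_argmax))).
  { rewrite <- (exp_ln (qt / q)) by (apply Rdiv_lt_0_compat; auto).
    rewrite <- !exp_plus. f_equal. unfold jump_argmax. field. lra. }
  unfold jump_max, jump_gain. rewrite H1.
  replace (ln (qt / q)) with (- g * jump_argmax - a + b) by (unfold jump_argmax; field; lra).
  field. lra.
Qed.

Lemma jump_gain_le p : jump_gain p <= jump_max.
Proof.
  pose proof (jump_max_sub_gain p). pose proof (exp_ineq1_le (- g * (p - jump_argmax))).
  pose proof (exp_pos (- g * w + a)).
  assert (0 <= exp (- g * w + a) * qt); [apply Rmult_le_pos; lra | nra].
Qed.

Lemma jump_gain_argmax : jump_gain jump_argmax = jump_max.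
Proof.
  pose proof (jump_max_sub_gain jump_argmax) as Hgap.
  rewrite Rminus_diag, Rmult_0_r, Rplus_0_r, exp_0 in Hgap. lra.
Qed.

Lemma jump_gain_eq_max p : jump_gain p = jump_max -> p = jump_argmax.
Proof.
  intros Heq. destruct (Req_dec p jump_argmax) as [E | E]; auto. exfalso.
  pose proof (jump_max_sub_gain p).
  assert (Hx : - g * (p - jump_argmax) <> 0) by (intros Hc; apply Rmult_integral in Hc; lra).
  pose proof (exp_ineq1 _ Hx). pose proof (exp_pos (- g * w + a)).
  assert (0 < exp (- g * w + a) * qt); [apply Rmult_lt_0_compat; lra | nra].
Qed.

End JumpGain.

Section Hamiltonian.
Variables (M : nat) (Q Qt : nat -> nat -> R) (zeta : nat -> R) (T gamma : R).
Hypotheses (HQ : is_generator M Q) (HQt : is_generator M Qt)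
  (Hzero : forall i j, (i < M)%nat -> (j < M)%nat -> i <> j -> (Q i j = 0 <-> Qt i j = 0))
  (Hgamma : 0 < gamma).
Variables (i : nat) (t w : R).
Hypothesis Hi : (i < M)%nat.

Let ph := phi M Q Qt zeta T.
Let Ei := exp (- gamma * w + ph i t).
Let gain (p : nat -> R) j := jump_gain gamma (Qt i j) (Q i j) (ph i t) (ph j t) w (p j).
Let max_gain j :=
  if Rlt_dec 0 (Q i j) then jump_max gamma (Qt i j) (Q i j) (ph i t) (ph j t) w else 0.

Lemma hjb_H_split pi0 p :
  hjb_H M Q Qt zeta T gamma i t w (gamma * Ei) (- gamma ^ 2 * Ei) pi0 p =
  Ei * (zeta i * pi0 * gamma - pi0 ^ 2 / 2 * gamma ^ 2) + sumoff M i (gain p).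
Proof.
  unfold hjb_H, u, gain.
  rewrite (sumoff_ext M i (fun j => jump_gain gamma (Qt i j) (Q i j) (ph i t) (ph j t) w (p j))
     (fun j => - (gamma * Ei) * (Qt i j * p j) +
       Q i j * (- exp (- gamma * (w + p j) + ph j t) - - exp (- gamma * w + ph i t))))
    by (intros; unfold jump_gain, Ei; ring).
  rewrite sumoff_plus, sumoff_scal_l. unfold ph, Ei. ring.
Qed.

Lemma no_jump_rates j : (j < M)%nat -> j <> i -> ~ 0 < Q i j -> Q i j = 0 /\ Qt i j = 0.
Proof.
  intros Hj Hji Hn. destruct HQ as [HQ_off _].
  pose proof (HQ_off i j Hi Hj (fun e => Hji (eq_sym e))).
  assert (Hq0 : Q i j = 0) by lra. split; auto. apply (Hzero i j); auto.
Qed.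

Lemma jump_rate_pos j : (j < M)%nat -> j <> i -> 0 < Q i j -> 0 < Qt i j.
Proof.
  intros Hj Hji Hq. destruct HQt as [HQt_off _].
  destruct (HQt_off i j Hi Hj (fun e => Hji (eq_sym e))) as [Hlt | Heq]; auto.
  assert (Q i j = 0) by (apply (Hzero i j); auto). lra.
Qed.

Lemma gain_le p j : (j < M)%nat -> j <> i -> gain p j <= max_gain j.
Proof.
  intros Hj Hji. unfold gain, max_gain. destruct (Rlt_dec 0 (Q i j)) as [Hq | Hq].
  - apply jump_gain_le; auto. apply jump_rate_pos; auto.
  - destruct (no_jump_rates j Hj Hji Hq) as [-> ->]. unfold jump_gain. lra.
Qed.

Lemma gain_pij_star j : (j < M)%nat -> j <> i ->
  gain (pij_star M Q Qt zeta T gamma i t) j = max_gain j.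
Proof.
  intros Hj Hji. unfold gain, max_gain. destruct (Rlt_dec 0 (Q i j)) as [Hq | Hq].
  - apply jump_gain_argmax; auto. apply jump_rate_pos; auto.
  - destruct (no_jump_rates j Hj Hji Hq) as [-> ->]. unfold jump_gain. lra.
Qed.

Let rhs := tvp_rhs M Qt (alpha M Q Qt zeta) T i t.

Lemma rhs_split : Ei * rhs = Ei * (zeta i ^ 2 / 2) + sumoff M i max_gain.
Proof.
  unfold rhs. rewrite phi_rhs by auto. fold ph. unfold alpha.
  rewrite (sumoff_ext M i max_gain (fun j => Ei * ((if Rlt_dec 0 (Q i j)
      then Qt i j * ln (Qt i j / Q i j) - Qt i j + Q i j else 0) + Qt i j * (ph i t - ph j t)))).
  - rewrite sumoff_scal_l, sumoff_plus. ring.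
  - intros j Hj Hji. unfold max_gain, jump_max, Ei. destruct (Rlt_dec 0 (Q i j)) as [Hq | Hq].
    + ring.
    + destruct (no_jump_rates j Hj Hji Hq) as [_ ->]. ring.
Qed.

Lemma diffusion_gain_gap pi0 :
  Ei * (zeta i ^ 2 / 2) - Ei * (zeta i * pi0 * gamma - pi0 ^ 2 / 2 * gamma ^ 2)
  = Ei * ((gamma * pi0 - zeta i) ^ 2 / 2).
Proof. field. Qed.

Lemma hjb_H_le pi0 p :
  hjb_H M Q Qt zeta T gamma i t w (gamma * Ei) (- gamma ^ 2 * Ei) pi0 p <= Ei * rhs.
Proof.
  rewrite hjb_H_split, rhs_split.
  assert (sumoff M i (gain p) <= sumoff M i max_gain)
    by (apply sumoff_le; intros; apply gain_le; auto).
  pose proof (diffusion_gain_gap pi0). pose proof (pow2_ge_0 (gamma * pi0 - zeta i)).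
  assert (HE : 0 < Ei) by apply exp_pos. nra.
Qed.

Lemma hjb_H_star :
  hjb_H M Q Qt zeta T gamma i t w (gamma * Ei) (- gamma ^ 2 * Ei)
    (pi0_star zeta gamma i) (pij_star M Q Qt zeta T gamma i t) = Ei * rhs.
Proof.
  rewrite hjb_H_split, rhs_split, (sumoff_ext M i _ max_gain)
    by (intros; apply gain_pij_star; auto).
  unfold pi0_star. f_equal. f_equal. field. lra.
Qed.

Lemma hjb_H_eq_max pi0 p :
  hjb_H M Q Qt zeta T gamma i t w (gamma * Ei) (- gamma ^ 2 * Ei) pi0 p = Ei * rhs ->
  pi0 = pi0_star zeta gamma i /\
  forall j, (j < M)%nat -> j <> i -> 0 < Q i j -> p j = pij_star M Q Qt zeta T gamma i t j.
Proof.
  rewrite hjb_H_split, rhs_split. intros Heq.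
  pose proof (diffusion_gain_gap pi0). assert (HE : 0 < Ei) by apply exp_pos.
  assert (Hgap_nonneg : forall k, (k < M)%nat -> k <> i -> 0 <= max_gain k - gain p k).
  { intros k Hk Hki. pose proof (gain_le p k Hk Hki). lra. }
  assert (sumoff M i (gain p) <= sumoff M i max_gain)
    by (apply sumoff_le; intros; apply gain_le; auto).
  pose proof (pow2_ge_0 (gamma * pi0 - zeta i)).
  assert (Hsq : (gamma * pi0 - zeta i) ^ 2 = 0) by nra.
  assert (Hjumps : sumoff M i (fun j => max_gain j - gain p j) = 0) by (rewrite sumoff_minus; nra).
  split.
  - assert (Hpi0 : gamma * pi0 = zeta i) by nra.
    unfold pi0_star. rewrite <- Hpi0. field. lra.
  - intros j Hj Hji Hq. pose proof (sumoff_nonneg_eq0 M i _ j Hgap_nonneg Hjumps Hj Hji) as Hj0.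
    unfold max_gain, gain in Hj0. destruct (Rlt_dec 0 (Q i j)); [| lra].
    apply (jump_gain_eq_max gamma (Qt i j) (Q i j) (ph i t) (ph j t) w); auto.
    + apply jump_rate_pos; auto.
    + lra.
Qed.

End Hamiltonian.

Lemma derivable_pt_lim_neg_exp_affine g c w :
  derivable_pt_lim (fun x => - exp (- g * x + c)) w (g * exp (- g * w + c)).
Proof. apply is_derive_Reals. auto_derive; auto. ring. Qed.

Lemma derivable_pt_lim_scal_exp_affine g c w :
  derivable_pt_lim (fun x => g * exp (- g * x + c)) w (- g ^ 2 * exp (- g * w + c)).
Proof. apply is_derive_Reals. auto_derive; auto. ring. Qed.

Lemma derivable_pt_lim_neg_exp_comp c (f : R -> R) t l : derivable_pt_lim f t l ->
  derivable_pt_lim (fun s => - exp (c + f s)) t (- (exp (c + f t) * l)).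
Proof.
  intros Hf. replace (exp (c + f t) * l) with (exp (c + f t) * (0 + l)) by ring.
  apply derivable_pt_lim_opp, (derivable_pt_lim_comp (fun s => c + f s) exp).
  - apply (derivable_pt_lim_plus (fun _ => c) f); [apply derivable_pt_lim_const | auto].
  - apply derivable_pt_lim_exp.
Qed.

Lemma continuity_2d_pt_exp_affine g (f : R -> R) t w : continuity_pt f t ->
  continuity_2d_pt (fun t w => exp (- g * w + f t)) t w.
Proof.
  intros Hf. apply (continuity_1d_2d_pt_comp exp (fun t w => - g * w + f t)).
  - apply derivable_continuous_pt, derivable_pt_exp.
  - apply (continuity_2d_pt_plus (fun t w => - g * w) (fun t w => f t)).
    + apply (continuity_2d_pt_mult (fun _ _ => - g) (fun _ w => w));
        [apply continuity_2d_pt_const | apply continuity_2d_pt_id2].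
    + apply (continuity_1d_2d_pt_comp f (fun t _ => t)); auto. apply continuity_2d_pt_id1.
Qed.

Lemma cont_on_strip_of_continuity_2d T f :
  (forall t w, continuity_2d_pt f t w) -> cont_on_strip T f.
Proof.
  intros H t w _ eps Heps. destruct (H t w (mkposreal eps Heps)) as [d Hd].
  exists d. split; [apply cond_pos |]. intros t' w' _ H1 H2. apply Hd; auto.
Qed.

Section ValueFunction.
Variables (M : nat) (Q Qt : nat -> nat -> R) (zeta : nat -> R) (T gamma : R) (i : nat).
Hypothesis Hi : (i < M)%nat.

Let E t w := exp (- gamma * w + phi M Q Qt zeta T i t).
Let rhs t := tvp_rhs M Qt (alpha M Q Qt zeta) T i t.

Lemma u_derivatives t w :
  derivable_pt_lim (fun s => u M Q Qt zeta T gamma i s w) t (- (E t w * rhs t)) /\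
  derivable_pt_lim (fun x => u M Q Qt zeta T gamma i t x) w (gamma * E t w) /\
  derivable_pt_lim (fun x => gamma * E t x) w (- gamma ^ 2 * E t w).
Proof.
  unfold u, E. repeat split.
  - apply derivable_pt_lim_neg_exp_comp, derivable_pt_lim_tvp_sol; auto.
  - apply derivable_pt_lim_neg_exp_affine.
  - apply derivable_pt_lim_scal_exp_affine.
Qed.

Lemma cont_on_strip_u_derivatives :
  cont_on_strip T (fun t w => - (E t w * rhs t)) /\
  cont_on_strip T (fun t w => gamma * E t w) /\
  cont_on_strip T (fun t w => - gamma ^ 2 * E t w).
Proof.
  assert (HE : forall t w, continuity_2d_pt E t w)
    by (intros; apply continuity_2d_pt_exp_affine, continuity_pt_tvp_sol; auto).
  repeat split; apply cont_on_strip_of_continuity_2d; intros t w.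
  - apply continuity_2d_pt_opp, (continuity_2d_pt_mult E); auto.
    apply (continuity_1d_2d_pt_comp rhs (fun t _ => t));
      [apply continuity_pt_tvp_rhs; auto | apply continuity_2d_pt_id1].
  - apply (continuity_2d_pt_mult (fun _ _ => gamma)); [apply continuity_2d_pt_const | auto].
  - apply (continuity_2d_pt_mult (fun _ _ => - gamma ^ 2)); [apply continuity_2d_pt_const | auto].
Qed.

End ValueFunction.

Theorem mainTheorem1 (M : nat) (Q Qt : nat -> nat -> R) (zeta : nat -> R)
  (gamma T : R)
  (HQ : is_generator M Q) (HQt : is_generator M Qt)
  (Hzero : forall i j, (i < M)%nat -> (j < M)%nat -> i <> j ->
             (Q i j = 0 <-> Qt i j = 0))
  (Hirr : irreducible M Qt)
  (Hgamma : 0 < gamma) (HT : 0 < T) :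
  (exists dphi : nat -> R -> R,
     forall i, (i < M)%nat ->
       (forall t, 0 <= t <= T ->
          derivable_pt_lim (phi M Q Qt zeta T i) t (dphi i t) /\
          dphi i t
            - sumoff M i (fun j => Qt i j * (phi M Q Qt zeta T i t - phi M Q Qt zeta T j t))
            - alpha M Q Qt zeta i = 0) /\
       phi M Q Qt zeta T i T = 0) /\
  (forall (psi dpsi : nat -> R -> R),
     (forall i, (i < M)%nat ->
        (forall t, 0 <= t <= T -> continue_in (psi i) (fun x => 0 <= x <= T) t) /\
        (forall t, 0 < t < T ->
           derivable_pt_lim (psi i) t (dpsi i t) /\
           dpsi i t - sumoff M i (fun j => Qt i j * (psi i t - psi j t))
             - alpha M Q Qt zeta i = 0) /\
        psi i T = 0) ->
     forall i t, (i < M)%nat -> 0 <= t <= T -> psi i t = phi M Q Qt zeta T i t) /\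
  (forall i, (i < M)%nat ->
     exists Ut Uw Uww : R -> R -> R,
       (forall t w, 0 <= t <= T ->
          derivable_pt_lim (fun s => u M Q Qt zeta T gamma i s w) t (Ut t w) /\
          derivable_pt_lim (fun x => u M Q Qt zeta T gamma i t x) w (Uw t w) /\
          derivable_pt_lim (fun x => Uw t x) w (Uww t w)) /\
       cont_on_strip T Ut /\ cont_on_strip T Uw /\ cont_on_strip T Uww /\
       (forall w, u M Q Qt zeta T gamma i T w = - exp (- gamma * w)) /\
       (forall t w, 0 <= t <= T ->
          Uww t w = gamma ^ 2 * u M Q Qt zeta T gamma i t w /\ Uww t w < 0) /\
       (forall t w, 0 <= t < T ->
          is_lub (fun y => exists (pi0 : R) (p : nat -> R),
                     y = hjb_H M Q Qt zeta T gamma i t w (Uw t w) (Uww t w) pi0 p)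
                 (- Ut t w) /\
          hjb_H M Q Qt zeta T gamma i t w (Uw t w) (Uww t w)
            (pi0_star zeta gamma i) (pij_star M Q Qt zeta T gamma i t) = - Ut t w /\
          (forall (pi0 : R) (p : nat -> R),
             hjb_H M Q Qt zeta T gamma i t w (Uw t w) (Uww t w) pi0 p = - Ut t w ->
             pi0 = pi0_star zeta gamma i /\
             forall j, (j < M)%nat -> j <> i -> 0 < Q i j ->
               p j = pij_star M Q Qt zeta T gamma i t j))).
Proof.
  split; [| split; [apply phi_unique; auto |]].
  - exists (tvp_rhs M Qt (alpha M Q Qt zeta) T). intros i Hi. split; [| apply phi_T; auto].
    intros t _. split; [apply derivable_pt_lim_tvp_sol; auto | rewrite phi_rhs by auto; ring].
  - intros i Hi.
    set (E t w := exp (- gamma * w + phi M Q Qt zeta T i t)).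
    exists (fun t w => - (E t w * tvp_rhs M Qt (alpha M Q Qt zeta) T i t)),
      (fun t w => gamma * E t w), (fun t w => - gamma ^ 2 * E t w).
    destruct (cont_on_strip_u_derivatives M Q Qt zeta T gamma i Hi) as (HUt & HUw & HUww).
    refine (conj _ (conj HUt (conj HUw (conj HUww (conj _ (conj _ _)))))).
    + intros t w _. apply u_derivatives; auto.
    + intros w. unfold u. rewrite phi_T, Rplus_0_r; auto.
    + intros t w _. unfold u, E. pose proof (exp_pos (- gamma * w + phi M Q Qt zeta T i t)).
      pose proof (pow_lt gamma 2 Hgamma). split; [ring | nra].
    + intros t w _. rewrite Ropp_involutive. unfold E. split; [split | split].
      * intros y [pi0 [p ->]]. apply hjb_H_le; auto.
      * intros b Hb. apply Hb. do 2 eexists. symmetry. apply hjb_H_star; auto.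
      * apply hjb_H_star; auto.
      * intros pi0 p. apply hjb_H_eq_max; auto.
Qed.
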